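(* Let $W=\langle s,t: s^2=t^2=(st)^m=1\rangle$ be a Coxeter group of rank $2$ with $S=\{s,t\}$, where $m\ge2$ is the order of $st$, and let $w_0$ be its longest element. Then $e_S=\operatorname{Av}(\langle w_0\rangle)-\operatorname{Av}(W)$.
   Context: For a subgroup $U$ of $W$, $\operatorname{Av}(U)=\frac1{|U|}\sum_{u\in U}u\in\mathbb CW$. Descent algebra data: for $J\subseteq S$, $X_J=\{w\in W:\ell(rw)>\ell(w)\ \forall r\in J\}$, $x_J=\sum_{x\in X_J}x^{-1}$, $X_J^\sharp=\{x\in X_J:x^{-1}Jx\subseteq S\}$; for $K,L\subseteq S$, $m_{KL}=|X_K\cap X_L^\sharp|$ if $L\subseteq K$ and $0$ otherwise; the matrix $(m_{KL})$ is invertible and the elements $e_L$ ($L\subseteq S$) are defined by $x_K=\sum_{L\subseteq S}m_{KL}e_L$ for all $K\subseteq S$. *)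

From mathcomp Require Import all_boot all_order all_algebra all_fingroup all_field.
Set Implicit Arguments. Unset Strict Implicit. Unset Printing Implicit Defensive.
Import GRing.Theory.
Local Open Scope group_scope.

Section Descent.
Variable gT : finGroupType.

Definition setpow (A : {set gT}) (n : nat) : {set gT} :=
  iter n (fun B => A * B) [set 1].

(* word length of w w.r.t. the generating set A: the least n with w in A^n
   (minimal words have length < #|gT|, so searching n < #|gT| suffices). *)
Definition wlen (A : {set gT}) (w : gT) : nat :=
  find (fun n => w \in setpow A n) (iota 0 #|gT|).

Definition Xset (W A J : {set gT}) : {set gT} :=
  [set w in W | [forall r in J, wlen A w < wlen A (r * w)]].

Definition Xsharp (W A J : {set gT}) : {set gT} :=
  [set x in Xset W A J | (J :^ x) \subset A].

Definition mKL (W A K L : {set gT}) : nat :=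
  if L \subset K then #|Xset W A K :&: Xsharp W A L| else 0.

(* group algebra C W, realised as complex-valued functions on gT
   (elements supported in W); gel g is the basis element g. *)
Definition gel (g : gT) : {ffun gT -> algC} := [ffun h => ((h == g)%:R)%R].

Definition sc (c : algC) (f : {ffun gT -> algC}) : {ffun gT -> algC} :=
  [ffun h => (c * f h)%R].

Definition xJ (W A J : {set gT}) : {ffun gT -> algC} :=
  (\sum_(x in Xset W A J) gel x^-1)%R.

Definition Av (U : {set gT}) : {ffun gT -> algC} :=
  sc ((#|U|%:R)^-1)%R (\sum_(u in U) gel u)%R.

Definition e_rel (W A : {set gT}) (e : {set gT} -> {ffun gT -> algC}) : Prop :=
  forall K : {set gT}, K \subset A ->
    xJ W A K = (\sum_(L : {set gT} | L \subset A) sc (mKL W A K L)%:R (e L))%R.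

End Descent.

From mathcomp Require Import all_boot all_order all_algebra all_fingroup all_field.
From mathcomp Require Import cyclic zify ring.
Import GRing.Theory Num.Theory.
Set Implicit Arguments. Unset Strict Implicit. Unset Printing Implicit Defensive.
Local Open Scope group_scope.

(* W is dihedral of order 2m.  Write alt a b k for the alternating word a b a ... of length k.
   Every element of W is alt s t k or alt t s k with k <= m, these words are pairwise distinct
   except for the braid relation alt s t m = alt t s m = w0, and alt a b k has length k.
   Hence X_{s} = {alt t s k | k < m}, X_{t} = {alt s t k | k < m}, X_{s} :&: X_{t} = X_S = {1},
   X_{s} :|: X_{t} = W :\ w0 and X_{s} :&: X_{s}^# = {1, alt t s m.-1}.  The relations
   x_K = sum_L m_KL e_L therefore form the triangular system
     x_0 = |W| e_0,   x_s = |X_s| e_0 + 2 e_s,   x_t = |X_t| e_0 + 2 e_t,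
     x_S = e_0 + e_s + e_t + e_S,
   which has exactly one solution.  As x_S = 1, x_0 = |W| Av(W) and x_s + x_t = x_0 + 1 - w0,
   it gives e_S = (1 + w0)/2 - Av(W) = Av(<w0>) - Av(W). *)

Section GroupFacts.
Variable gT : finGroupType.
Implicit Types (x y : gT) (A : {set gT}).

Lemma order_mulC x y : #[y * x] = #[x * y].
Proof. by rewrite -(orderJ (x * y) x) conjgE -mulgA mulKg. Qed.

Lemma order2_sqr x : #[x] = 2 -> x * x = 1.
Proof. by move=> x2; rewrite -{1}(invg2id x2) mulVg. Qed.

Lemma gen_ind A (P : gT -> Prop) :
  P 1 -> (forall x w, x \in A -> P w -> P (x * w)) ->
  forall w, w \in <<A>> -> P w.
Proof.
move=> P1 PM w /gen_prodgP[n [c cA ->]].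
elim: n c cA => [|n IHn] c cA; first by rewrite big_ord0.
by rewrite big_ord_recl; apply: PM => //; apply: IHn => i; exact: cA.
Qed.

End GroupFacts.

Section WordLength.
Variable gT : finGroupType.
Implicit Types (A : {set gT}) (w : gT).

Lemma wlen_eq0 A w : (wlen A w == 0) = (w == 1).
Proof.
have : 0 < #|gT| by apply/card_gt0P; exists 1.
by rewrite /wlen; case: #|gT| => [//|N] _ /=; rewrite inE; case: (w == 1).
Qed.

Lemma wlen_eq A w k : k < #|gT| -> w \in setpow A k ->
  (forall j, j < k -> w \notin setpow A j) -> wlen A w = k.
Proof.
move=> kN wk wj; rewrite /wlen -(subnKC (ltnW kN)) iotaD find_cat size_iota.
have /negPf -> : ~~ has (fun n => w \in setpow A n) (iota 0 k).
  by apply/hasPn => j; rewrite mem_iota add0n => /wj.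
case: (#|gT| - k) (subn_gt0 k #|gT|) => [|r]; first by rewrite kN.
by rewrite /= add0n wk addn0.
Qed.

End WordLength.

Section DescentSets.
Variables (gT : finGroupType) (W A : {set gT}).
Implicit Types (J K L : {set gT}) (w : gT).

Lemma Xset_sub J : Xset W A J \subset W.
Proof. by apply/subsetP => w; rewrite inE => /andP[]. Qed.

Lemma Xset0 : Xset W A set0 = W.
Proof.
by apply/setP => w; rewrite inE; apply/andb_idr => _; apply/forall_inP => r; rewrite inE.
Qed.

Lemma XsetU J1 J2 : Xset W A (J1 :|: J2) = Xset W A J1 :&: Xset W A J2.
Proof.
apply/setP => w; rewrite !inE; case: (w \in W) => //=.
apply/forall_inP/andP => [lt | [/forall_inP lt1 /forall_inP lt2] r].
  by split; apply/forall_inP => r rJ; apply: lt; rewrite inE rJ ?orbT.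
by rewrite inE => /orP[]; [apply: lt1 | apply: lt2].
Qed.

Lemma mem_Xset1 r w :
  (w \in Xset W A [set r]) = (w \in W) && (wlen A w < wlen A (r * w)).
Proof.
rewrite inE; congr (_ && _).
by apply/forall_inP/idP => [/(_ r (set11 r)) // | lt r' /set1P ->].
Qed.

Lemma Xsharp_sub J : Xsharp W A J \subset Xset W A J.
Proof. by apply/subsetP => w; rewrite inE => /andP[]. Qed.

Lemma Xsharp0 : Xsharp W A set0 = W.
Proof. by apply/setP => w; rewrite inE Xset0 conj0g sub0set andbT. Qed.

Lemma mKL_K0 K : mKL W A K set0 = #|Xset W A K|.
Proof. by rewrite /mKL sub0set Xsharp0 (setIidPl (Xset_sub K)). Qed.

Lemma mKL_out K L x : x \in L -> x \notin K -> mKL W A K L = 0.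
Proof.
move=> xL xK; rewrite /mKL; case: ifP => // /subsetP/(_ x xL).
by rewrite (negPf xK).
Qed.

Lemma mKL_top K L : 1 \in W -> Xset W A K = [set 1] ->
  L \subset K -> L \subset A -> 1 \notin L -> mKL W A K L = 1%N.
Proof.
move=> W1 XK LK LA L1; rewrite /mKL LK XK.
suff /setIidPl -> : [set 1] \subset Xsharp W A L by rewrite cards1.
rewrite sub1set inE conjsg1 LA andbT inE W1; apply/forall_inP => r rL.
have /eqP -> : wlen A 1 == 0 by rewrite wlen_eq0.
by rewrite mulg1 lt0n wlen_eq0; apply: contraNneq L1 => <-.
Qed.

End DescentSets.

Lemma sum_indicator (R : pzSemiRingType) (T : finType) (X : {set T}) y :
  (\sum_(x in X) (y == x)%:R = (y \in X)%:R :> R)%R.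
Proof.
have [yX | yNX] := boolP (y \in X); last first.
  by rewrite big1 // => x xX; case: eqP xX yNX => // -> ->.
rewrite (bigD1 y) //= eqxx big1 ?addr0 // => x /andP[_].
by rewrite eq_sym => /negPf ->.
Qed.

Lemma indicatorUI (T : finType) (A B : {set T}) x :
  (x \in A) + (x \in B) = (x \in A :|: B) + (x \in A :&: B).
Proof. by rewrite in_setU in_setI; case: (x \in A); case: (x \in B). Qed.

Section GroupAlgebra.
Variable gT : finGroupType.
Implicit Types (X : {set gT}) (h : gT).

Lemma sum_gelE X h : (\sum_(x in X) gel x)%R h = (h \in X)%:R%R.
Proof.
by rewrite sum_ffunE -sum_indicator; apply: eq_bigr => x _; rewrite ffunE.
Qed.

Lemma xJE W A J h : xJ W A J h = ((h^-1)%g \in Xset W A J)%:R%R.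
Proof.
rewrite sum_ffunE -sum_indicator; apply: eq_bigr => x _.
by rewrite ffunE eq_sym eqg_invLR eq_sym.
Qed.

End GroupAlgebra.

Lemma subset_pairP (T : finType) (a b : T) (L : {set T}) : L \subset [set a; b] ->
  [\/ L = set0, L = [set a], L = [set b] | L = [set a; b]].
Proof.
move=> /subsetP LS.
have -> : L = [set x | (x == a) && (a \in L) || (x == b) && (b \in L)].
  apply/setP => x; rewrite inE; apply/idP/idP; last by case/orP=> /andP[/eqP->].
  by move=> xL; case/set2P: (LS x xL) => ex; rewrite -ex xL eqxx ?orbT.
case: (a \in L); case: (b \in L); [apply: Or44 | apply: Or42 | apply: Or43 | apply: Or41];
  by apply/setP => x; rewrite !inE ?andbT ?andbF ?orbF.
Qed.

Lemma sum_subsets_pair (T : finType) (V : nmodType) (a b : T) (F : {set T} -> V) :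
  a != b -> (\sum_(L : {set T} | L \subset [set a; b]) F L =
             F set0 + F [set a] + F [set b] + F [set a; b])%R.
Proof.
move=> ab; have nonempty (L : {set T}) x : x \in L -> L != set0.
  by move=> xL; apply/set0Pn; exists x.
have a_ab : a \in [set a; b] by rewrite set21.
have b_ab : b \in [set a; b] by rewrite set22.
have ba : (b \in [set a]) = false by rewrite inE eq_sym (negPf ab).
rewrite (bigD1 set0) ?sub0set //= (bigD1 [set a]) /=; last first.
  by rewrite sub1set a_ab (nonempty _ a) ?set11.
rewrite (bigD1 [set b]) /=; last first.
  rewrite sub1set b_ab (nonempty _ b) ?set11 //=.
  by apply: contraFneq ba => <-; rewrite set11.
rewrite (bigD1 [set a; b]) /=; last first.
  rewrite subxx (nonempty _ a) //=; apply/andP; split; first by apply: contraFneq ba => <-.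
  by apply/eqP => /setP /(_ a); rewrite !inE eqxx (negPf ab).
rewrite big_pred0 ?addr0 ?addrA // => L.
case: (boolP (L \subset [set a; b])) => //= /subset_pairP[] ->; by rewrite ?eqxx ?andbF.
Qed.

Section AlternatingWords.
Variable gT : finGroupType.
Implicit Types (a b c w : gT) (i j k n : nat).

Fixpoint alt a b k : gT := if k is k'.+1 then a * alt b a k' else 1.

Lemma alt1 a b : alt a b 1 = a.
Proof. exact: mulg1. Qed.

Lemma altD a b j k :
  alt a b (j + k) = alt a b j * (if odd j then alt b a k else alt a b k).
Proof.
elim: j a b => [|j IHj] a b /=; first by rewrite mul1g.
by rewrite IHj mulgA; case: (odd j).
Qed.

Lemma altSr a b k : alt a b k.+1 = alt a b k * (if odd k then b else a).
Proof. by rewrite -addn1 altD; case: (odd k); rewrite alt1. Qed.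

Lemma alt_double a b i : alt a b i.*2 = (a * b) ^+ i.
Proof. by elim: i => [|i IHi] //; rewrite doubleS /= IHi expgS mulgA. Qed.

Lemma alt_in_group (G : {group gT}) a b k : a \in G -> b \in G -> alt a b k \in G.
Proof.
by elim: k a b => [|k IHk] a b aG bG; rewrite ?group1 //= groupM ?IHk.
Qed.

Lemma alt_setpow (A : {set gT}) a b k :
  a \in A -> b \in A -> alt a b k \in setpow A k.
Proof.
elim: k a b => [|k IHk] a b aA bA; first exact: set11.
exact: mem_mulg aA (IHk b a bA aA).
Qed.

Lemma alt_cancel a b j k : j <= k -> alt a b k = alt a b j ->
  alt a b (k - j) = 1 \/ alt b a (k - j) = 1.
Proof.
elim: j k a b => [|j IHj] [|k] a b //=; rewrite ?subn0; try by left.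
by rewrite ltnS subSS => jk /mulgI /(IHj _ _ _ jk) []; [right | left].
Qed.

Section Involutions.
Variables a b : gT.
Hypotheses (a2 : #[a] = 2) (b2 : #[b] = 2).

Lemma mulg_altS k : a * alt a b k.+1 = alt b a k.
Proof. by rewrite /= -{1}(invg2id a2) mulKg. Qed.

Lemma alt_inv k : (alt a b k)^-1 = if odd k then alt a b k else alt b a k.
Proof.
elim: k => [|k IHk]; first by rewrite invg1.
by rewrite {1}altSr invMg IHk /=; case: (odd k); rewrite /= ?(invg2id a2) ?(invg2id b2).
Qed.

Lemma alt_odd_conj k :
  alt a b (k + k.+1) = (if odd k then b else a) ^ (alt a b k)^-1.
Proof. by rewrite altD conjgE invgK alt_inv; case: (odd k); rewrite /= mulgA. Qed.

Lemma alt_eq1 n : (alt a b n == 1) = ~~ odd n && (#[a * b] %| n./2).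
Proof.
rewrite -{1}(odd_double_half n); case: (odd n); last first.
  by rewrite add0n alt_double -order_dvdn.
rewrite add1n -addnn -addnS alt_odd_conj conjg_eq1 /=.
by case: (odd _); apply/negbTE/eqP => c1; [move: b2 | move: a2]; rewrite c1 order1.
Qed.

Lemma alt_mulr c k : 0 < k -> c \in [set a; b] ->
  alt a b k * c = alt a b k.+1 \/ alt a b k * c = alt a b k.-1.
Proof.
case: k => // k _ /set2P[] ->; rewrite [alt a b k.+2]altSr [alt a b k.+1]altSr oddS;
  case: (odd k) => /=; by [left | right; rewrite -mulgA ?order2_sqr ?mulg1].
Qed.

End Involutions.

Lemma alt_cross a b j k : #[a] = 2 -> #[b] = 2 -> alt a b j = alt b a k ->
  alt a b (j + k) = 1 \/ alt b a (j + k) = 1.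
Proof.
elim: k j a b => [|k IHk] j a b a2 b2; first by rewrite addn0; left.
move=> /(congr1 (mulg b)); rewrite mulg_altS // => /(IHk j.+1 b a b2 a2).
by rewrite addnS -addSn => -[]; [right | left].
Qed.

Definition is_alt a b n w := exists2 k, k <= n & w = alt a b k \/ w = alt b a k.

Lemma is_altC a b n w : is_alt a b n w -> is_alt b a n w.
Proof. by case=> k kn [] ->; exists k => //; [right | left]. Qed.

Lemma is_alt_mulS a b n w : #[a] = 2 -> is_alt a b n w -> is_alt a b n.+1 (a * w).
Proof.
move=> a2 [k kn [] ->]; last by exists k.+1 => //; left.
case: k kn => [|k] kn; first by exists 1%N => //; left.
by exists k; [exact: leqW (ltnW kn) | right; rewrite mulg_altS].
Qed.

Lemma is_alt_mul a b m w : #[a] = 2 -> 0 < m -> alt a b m = alt b a m ->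
  is_alt a b m w -> is_alt a b m (a * w).
Proof.
move=> a2 m0 braid [k km [] ->].
  case: k km => [|k] km; first by exists 1%N => //; left.
  by exists k; [exact: ltnW | right; rewrite mulg_altS].
case: (ltngtP k m) km => // [km _ | -> _]; first by exists k.+1 => //; left.
rewrite -braid; case: m m0 braid => // m _ _.
by exists m => //; right; rewrite mulg_altS.
Qed.

End AlternatingWords.

Section DihedralPair.
Variable gT : finGroupType.
Implicit Types (a b w : gT) (j k m n : nat).

Definition dihedral_pair a b m := [/\ #[a] = 2, #[b] = 2, #[a * b] = m & 1 < m].

Lemma dihedral_pairC a b m : dihedral_pair a b m -> dihedral_pair b a m.
Proof. by case=> a2 b2 ab_m m_gt1; split; rewrite // order_mulC. Qed.

Lemma alt_neq1 a b m n : dihedral_pair a b m -> 0 < n < m + m -> alt a b n != 1.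
Proof.
case=> a2 b2 ab_m _ /andP[n_gt0 n_lt]; rewrite alt_eq1 // ab_m negb_and negbK.
have [//|even_n] := boolP (odd n); apply/orP; right.
have := odd_double_half n; rewrite (negPf even_n) add0n => nE.
have half_gt0 : 0 < n./2 by lia.
by apply/negP => /(dvdn_leq half_gt0); lia.
Qed.

Lemma alt_braid a b m : dihedral_pair a b m -> alt a b m = alt b a m.
Proof.
case=> a2 b2 ab_m _.
have : alt a b (m + m) = 1 by rewrite addnn alt_double -ab_m expg_order.
by rewrite altD -(alt_inv b2 a2) => /eqP; rewrite mulg_eq1 invgK => /eqP.
Qed.

Lemma alt_inj a b m j k : dihedral_pair a b m -> j < k <= m -> alt a b k != alt a b j.
Proof.
move=> D /andP[jk km]; apply/eqP => /(alt_cancel (ltnW jk)).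
have kj : 0 < k - j < m + m by lia.
by case=> /eqP; apply/negP; [exact: alt_neq1 D kj | exact: alt_neq1 (dihedral_pairC D) kj].
Qed.

Lemma alt_neq_cross a b m j k : dihedral_pair a b m -> 0 < j + k < m + m ->
  alt a b j != alt b a k.
Proof.
move=> D jk; have [a2 b2 _ _] := D; apply/eqP => /(alt_cross a2 b2).
by case=> /eqP; apply/negP; [exact: alt_neq1 D jk | exact: alt_neq1 (dihedral_pairC D) jk].
Qed.

Lemma dihedral_lt_card a b m : dihedral_pair a b m -> m < #|gT|.
Proof.
(* a = (a * b) ^+ i would make the odd word alt a b i.*2.+1 trivial. *)
case=> a2 b2 ab_m _; have aNab : a \notin <[a * b]>.
  apply/cycleP => -[i ai]; have := alt_eq1 a2 b2 i.*2.+1.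
  by rewrite altSr odd_double alt_double -ai order2_sqr // eqxx /= odd_double.
rewrite -ab_m; apply: leq_trans (max_card (a |: <[a * b]>)).
by rewrite cardsU1 aNab.
Qed.

Lemma setpow_is_alt a b n w : #[a] = 2 -> #[b] = 2 ->
  w \in setpow [set a; b] n -> is_alt a b n w.
Proof.
move=> a2 b2; elim: n w => [|n IHn] w; first by move/set1P->; exists 0 => //; left.
case/mulsgP=> c w' /set2P[] -> /IHn w'_alt ->; first exact: is_alt_mulS.
exact: is_altC (is_alt_mulS b2 (is_altC w'_alt)).
Qed.

Lemma alt_not_is_alt a b m j k : dihedral_pair a b m -> j < k <= m ->
  ~ is_alt a b j (alt a b k).
Proof.
move=> D /andP[jk km] [i ij [] /eqP]; apply/negP.
  by apply: alt_inj D _; lia.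
by apply: alt_neq_cross D _; lia.
Qed.

Lemma wlen_alt a b m k : dihedral_pair a b m -> k <= m ->
  wlen [set a; b] (alt a b k) = k.
Proof.
move=> D km; have [a2 b2 _ _] := D; apply: wlen_eq.
- exact: leq_ltn_trans km (dihedral_lt_card D).
- by apply: alt_setpow; rewrite !inE eqxx ?orbT.
- move=> j jk; apply/negP => /(setpow_is_alt a2 b2).
  by apply: alt_not_is_alt D _; rewrite jk.
Qed.

Lemma wlen_altC a b m k : dihedral_pair a b m -> k <= m ->
  wlen [set a; b] (alt b a k) = k.
Proof. by move=> D; rewrite setUC; apply: wlen_alt (dihedral_pairC D). Qed.

Lemma gen_is_alt a b m w : dihedral_pair a b m ->
  w \in <<[set a; b]>> -> is_alt a b m w.
Proof.
move=> D; have [a2 b2 _ m_gt1] := D; have m_gt0 : 0 < m by lia.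
apply: gen_ind => [|c w' /set2P[] -> w'_alt]; first by exists 0 => //; left.
  exact: is_alt_mul (alt_braid D) _.
exact: is_altC (is_alt_mul b2 m_gt0 (esym (alt_braid D)) (is_altC w'_alt)).
Qed.

Lemma longest_alt a b m w0 : dihedral_pair a b m -> w0 \in <<[set a; b]>> ->
  (forall w, w \in <<[set a; b]>> -> wlen [set a; b] w <= wlen [set a; b] w0) ->
  w0 = alt a b m.
Proof.
move=> D w0W longest; have [a2 b2 _ _] := D.
have aW : a \in <<[set a; b]>> by rewrite mem_gen ?set21.
have bW : b \in <<[set a; b]>> by rewrite mem_gen ?set22.
have := longest _ (alt_in_group m aW bW); rewrite (wlen_alt D) //.
case: (gen_is_alt D w0W) => k km [] ->.
  by rewrite (wlen_alt D) // => mk; have -> : k = m by lia.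
by rewrite (wlen_altC D) // => mk; rewrite (alt_braid D); have -> : k = m by lia.
Qed.

Lemma Xset_dihedral a b m w : dihedral_pair a b m ->
  reflect (exists2 k, k < m & w = alt b a k)
          (w \in Xset <<[set a; b]>> [set a; b] [set a]).
Proof.
move=> D; have [a2 b2 _ m_gt1] := D.
have aW : a \in <<[set a; b]>> by rewrite mem_gen ?set21.
have bW : b \in <<[set a; b]>> by rewrite mem_gen ?set22.
have no_descent k : 0 < k <= m ->
    wlen [set a; b] (alt a b k) < wlen [set a; b] (a * alt a b k) = false.
  case: k => [//|k] /andP[_ km]; rewrite mulg_altS // (wlen_alt D) // (wlen_altC D).
    by rewrite ltnNge leqnSn.
  exact: ltnW.
rewrite mem_Xset1; apply: (iffP andP) => [[wW] | [k km ->]].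
  case: (gen_is_alt D wW) => k km [] ->.
    by case: k km => [|k] km; [exists 0 => //; lia | rewrite no_descent].
  case: (ltngtP k m) km => // [km _ | -> _]; first by exists k.
  by rewrite -(alt_braid D) no_descent //; lia.
split; first exact: alt_in_group.
by rewrite -[a * _]/(alt a b k.+1) (wlen_alt D) // (wlen_altC D) // ltnW.
Qed.

Lemma Xsharp_dihedral a b m : dihedral_pair a b m ->
  Xsharp <<[set a; b]>> [set a; b] [set a] = [set 1; alt b a m.-1].
Proof.
move=> D; have [a2 b2 _ m_gt1] := D; have m_gt0 : 0 < m by lia.
apply/setP => w; rewrite [w \in Xsharp _ _ _]inE conjg_set1 sub1set [RHS]in_set2.
apply/andP/orP => [[/(Xset_dihedral _ D)[k km ->] aw] | ].
  have [->|k_gt0] := posnP k; first by left.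
  have [-> | k_neq] := eqVneq k m.-1; first by right.
  (* a ^ w = c in S means a * w = w * c; both possible values of w * c clash with a * w. *)
  exfalso; move: aw; rewrite -(setUC [set b]) => /(alt_mulr b2 a2 k_gt0).
  rewrite -conjgC -[a * _]/(alt a b k.+1) => -[] /eqP; apply/negP.
    by apply: alt_neq_cross D _; lia.
  by apply: alt_neq_cross D _; lia.
case=> /eqP ->.
  by split; [apply/(Xset_dihedral _ D); exists 0 | rewrite conjg1 set21].
split; first by apply/(Xset_dihedral _ D); exists m.-1 => //; lia.
suff -> : a ^ alt b a m.-1 = (if odd m.-1 then a else b).
  by case: (odd _); rewrite ?set21 ?set22.
apply: (mulgI (alt b a m.-1)); rewrite -conjgC -altSr.
by rewrite -[a * _]/(alt a b m.-1.+1) (prednK m_gt0) (alt_braid D).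
Qed.

Lemma card_Xsharp_dihedral a b m : dihedral_pair a b m ->
  #|Xset <<[set a; b]>> [set a; b] [set a] :&:
    Xsharp <<[set a; b]>> [set a; b] [set a]| = 2.
Proof.
move=> D; have [_ _ _ m_gt1] := D.
rewrite (setIidPr (Xsharp_sub _ _ _)) (Xsharp_dihedral D) cards2 eq_sym.
by rewrite (alt_neq1 (dihedral_pairC D)) //; lia.
Qed.

End DihedralPair.

Section RankTwoDescentAlgebra.
Variables (gT : finGroupType) (s t : gT) (m : nat).
Hypothesis D : dihedral_pair s t m.
Let S := [set s; t].
Let W := <<S>>.
Let Xs := Xset W S [set s].
Let Xt := Xset W S [set t].

Let m_gt1 : 1 < m. Proof. by case: D. Qed.

Lemma s_neq_t : s != t.
Proof.
have [s2 _ st_m _] := D; apply: contraTneq m_gt1 => st.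
by rewrite -st_m -st order2_sqr // order1.
Qed.

Lemma descent_s w : reflect (exists2 k, k < m & w = alt t s k) (w \in Xs).
Proof. exact: Xset_dihedral D. Qed.

Lemma descent_t w : reflect (exists2 k, k < m & w = alt s t k) (w \in Xt).
Proof. by rewrite /Xt /W /S setUC; apply: Xset_dihedral (dihedral_pairC D). Qed.

Lemma descent_cap : Xs :&: Xt = [set 1].
Proof.
apply/setP => w; rewrite in_setI in_set1.
apply/andP/eqP => [[/descent_s[j jm ->] /descent_t[k km]] | ->].
  have [jk0|jk] := posnP (j + k); first by have -> : j = 0 by lia.
  by move/eqP; rewrite eq_sym (negPf (alt_neq_cross D _)) //; lia.
by split; [apply/descent_s | apply/descent_t]; exists 0 => //; lia.
Qed.

Lemma Xset_pair : Xset W S S = [set 1].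
Proof. by rewrite -descent_cap -XsetU. Qed.

Lemma card_Xsharp_s : #|Xs :&: Xsharp W S [set s]| = 2.
Proof. exact: card_Xsharp_dihedral D. Qed.

Lemma card_Xsharp_t : #|Xt :&: Xsharp W S [set t]| = 2.
Proof. by rewrite /Xt /W /S setUC; apply: card_Xsharp_dihedral (dihedral_pairC D). Qed.

Lemma sum_mKL_pairE K (e : {set gT} -> {ffun gT -> algC}) h :
  (\sum_(L : {set gT} | L \subset S) sc (mKL W S K L)%:R (e L))%R h =
    ((mKL W S K set0)%:R * e set0 h + (mKL W S K [set s])%:R * e [set s] h +
     (mKL W S K [set t])%:R * e [set t] h + (mKL W S K S)%:R * e S h)%R.
Proof.
rewrite sum_ffunE; under eq_bigr do rewrite ffunE.
exact: sum_subsets_pair s_neq_t.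
Qed.

Lemma mKL_rows (e : {set gT} -> {ffun gT -> algC}) h :
  let rhs K := (\sum_(L : {set gT} | L \subset S) sc (mKL W S K L)%:R (e L))%R h in
  [/\ rhs set0 = (#|W|%:R * e set0 h)%R,
      rhs [set s] = (#|Xs|%:R * e set0 h + 2 * e [set s] h)%R,
      rhs [set t] = (#|Xt|%:R * e set0 h + 2 * e [set t] h)%R &
      rhs S = (e set0 h + e [set s] h + e [set t] h + e S h)%R].
Proof.
have sS : s \in S by rewrite set21.
have tS : t \in S by rewrite set22.
have ts : t \notin [set s] by rewrite inE eq_sym s_neq_t.
have st : s \notin [set t] by rewrite inE s_neq_t.
have n0 (x : gT) : x \notin set0 by rewrite inE.
have S1 : 1 \notin S.
  have [s2 t2 _ _] := D; rewrite !inE !(eq_sym 1).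
  by apply/norP; split; apply/eqP => x1; [move: s2 | move: t2]; rewrite x1 order1.
have top (L : {set gT}) : L \subset S -> mKL W S S L = 1%N.
  move=> LS; apply: mKL_top; rewrite ?group1 ?Xset_pair //.
  by apply: contra S1; apply/subsetP.
rewrite /= !sum_mKL_pairE !mKL_K0 Xset0 Xset_pair cards1 !top ?sub0set ?sub1set ?subxx //.
rewrite (mKL_out _ _ (set11 s) (n0 s)) (mKL_out _ _ (set11 t) (n0 t)).
rewrite (mKL_out _ _ sS (n0 s)) (mKL_out _ _ (set11 t) ts) (mKL_out _ _ tS ts).
rewrite (mKL_out _ _ (set11 s) st) (mKL_out _ _ sS st).
rewrite /mKL !subxx card_Xsharp_s card_Xsharp_t.
by split; rewrite ?mulr0n ?mulr1n ?mul0r ?addr0 ?mul1r.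
Qed.

Lemma e_relP (e : {set gT} -> {ffun gT -> algC}) : e_rel W S e <-> forall h, [/\
    xJ W S set0 h = #|W|%:R * e set0 h,
    xJ W S [set s] h = #|Xs|%:R * e set0 h + 2 * e [set s] h,
    xJ W S [set t] h = #|Xt|%:R * e set0 h + 2 * e [set t] h &
    xJ W S S h = e set0 h + e [set s] h + e [set t] h + e S h]%R.
Proof.
split=> [rel h | eqs K /subset_pairP[] ->].
- have [r0 r1 r2 r3] := mKL_rows e h.
  split; [rewrite -r0 | rewrite -r1 | rewrite -r2 | rewrite -r3];
    by rewrite rel ?sub0set ?sub1set ?set21 ?set22.
all: apply/ffunP => h; have [r0 r1 r2 r3] := mKL_rows e h; have [e0 e1 e2 e3] := eqs h.
- by rewrite r0 e0.
- by rewrite r1 e1.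
- by rewrite r2 e2.
- by rewrite r3 e3.
Qed.

Variable w0 : gT.
Hypotheses (w0W : w0 \in W)
  (w0_longest : forall w, w \in W -> wlen S w <= wlen S w0).

Lemma w0E : w0 = alt s t m.
Proof. exact: longest_alt D w0W w0_longest. Qed.

Lemma w0_neq1 : w0 != 1.
Proof. by rewrite w0E (alt_neq1 D) //; lia. Qed.

Lemma invg_w0 : w0^-1 = w0.
Proof.
have [s2 t2 _ _] := D.
by rewrite w0E alt_inv //; case: (odd m); rewrite // (alt_braid D).
Qed.

Lemma order_w0 : #[w0] = 2.
Proof.
apply/eqP; rewrite eqn_leq order_gt1 w0_neq1 andbT dvdn_leq // order_dvdn.
by rewrite expgS expg1 -{1}invg_w0 mulVg.
Qed.

Lemma descent_cup : Xs :|: Xt = W :\ w0.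
Proof.
have sW : s \in W by rewrite mem_gen ?set21.
have tW : t \in W by rewrite mem_gen ?set22.
apply/setP => w; rewrite in_setU in_setD1 w0E.
apply/orP/andP => [[/descent_s[k km ->] | /descent_t[k km ->]] | [wNw0 wW]].
- split; last exact: alt_in_group.
  by rewrite eq_sym (alt_neq_cross D); lia.
- split; last exact: alt_in_group.
  by rewrite eq_sym (alt_inj D) // km leqnn.
have [k km w_eq] := gen_is_alt D wW.
have [k_lt | k_ge] := ltnP k m.
  by case: w_eq => ->; [right; apply/descent_t | left; apply/descent_s]; exists k.
have k_eq : k = m by lia.
by move: wNw0; case: w_eq => ->; rewrite k_eq ?(alt_braid D) eqxx.
Qed.

Lemma card_descent : #|Xs| + #|Xt| = #|W|.
Proof.
by rewrite -cardsUI descent_cup descent_cap cards1 (cardsD1 w0 W) w0W addnC.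
Qed.

Lemma xJ_cup h : (xJ W S [set s] h + xJ W S [set t] h =
  (h \in W)%:R + (h == 1%g)%:R - (h == w0)%:R)%R.
Proof.
rewrite !xJE -[LHS]natrD indicatorUI descent_cup descent_cap in_setD1 in_set1 invg_eq1.
rewrite groupV eqg_invLR invg_w0 natrD.
by case: (eqVneq h w0) => [->|_]; rewrite ?w0W /=; ring.
Qed.

Lemma e_rel_exists : exists e, e_rel W S e.
Proof.
have nW : (#|W|%:R != 0 :> algC)%R by rewrite pnatr_eq0 -lt0n cardG_gt0.
pose e0 h := (xJ W S set0 h / #|W|%:R)%R.
pose e1 h := ((xJ W S [set s] h - #|Xs|%:R * e0 h) / 2)%R.
pose e2 h := ((xJ W S [set t] h - #|Xt|%:R * e0 h) / 2)%R.
exists (fun L : {set gT} => [ffun h => if s \in L then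
                   if t \in L then xJ W S S h - e0 h - e1 h - e2 h else e1 h
                 else if t \in L then e2 h else e0 h]%R).
apply/e_relP => h; rewrite !ffunE !inE !eqxx [t == s]eq_sym (negPf s_neq_t) /=.
by split; rewrite /e1 /e2 /e0; field.
Qed.

Lemma e_rel_top e : e_rel W S e -> e S = (Av <[w0]> - Av W)%R.
Proof.
move=> /e_relP rel; apply/ffunP => h; have [x0 x1 x2 x3] := rel h.
have nW : (#|W|%:R != 0 :> algC)%R by rewrite pnatr_eq0 -lt0n cardG_gt0.
have e0E : e set0 h = (xJ W S set0 h / #|W|%:R)%R by rewrite x0; field.
have e1E : e [set s] h = ((xJ W S [set s] h - #|Xs|%:R * e set0 h) / 2)%R.
  by rewrite x1; field.
have e2E : e [set t] h = ((xJ W S [set t] h - #|Xt|%:R * e set0 h) / 2)%R.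
  by rewrite x2; field.
have eSE : e S h = (xJ W S S h - e set0 h - e [set s] h - e [set t] h)%R.
  by rewrite x3; ring.
have xJtE : xJ W S [set t] h =
    ((h \in W)%:R + (h == 1%g)%:R - (h == w0)%:R - xJ W S [set s] h)%R.
  by rewrite -xJ_cup; ring.
have cardtE : (#|Xt|%:R = #|W|%:R - #|Xs|%:R :> algC)%R.
  by rewrite -card_descent natrD; ring.
have xJ0 : xJ W S set0 h = (h \in W)%:R%R by rewrite xJE Xset0 groupV.
have xJS : xJ W S S h = (h == 1%g)%:R%R by rewrite xJE Xset_pair in_set1 invg_eq1.
have memw0 : (h \in <[w0]>) = (h == 1%g) + (h == w0) :> nat.
  rewrite cycle2g ?order_w0 // in_set2.
  have [-> | _] := eqVneq h 1%g; first by rewrite eq_sym (negPf w0_neq1).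
  by case: (h == w0).
rewrite !ffunE !sum_gelE memw0 natrD cycle2g ?order_w0 // cards2 eq_sym w0_neq1.
rewrite -[true.+1]/2%N eSE e1E e2E e0E xJtE cardtE xJ0 xJS.
by field.
Qed.

End RankTwoDescentAlgebra.

Theorem lemma5p4 (gT : finGroupType) (s t w0 : gT) (m : nat) :
  #[s] = 2%N -> #[t] = 2%N -> #[s * t] = m -> (2 <= m)%N ->
  let S := [set s; t] in
  let W := <<S>> in
  w0 \in W -> (forall w, w \in W -> (wlen S w <= wlen S w0)%N) ->
  (exists e : {set gT} -> {ffun gT -> algC}, e_rel W S e) /\
  (forall e : {set gT} -> {ffun gT -> algC}, e_rel W S e ->
     e S = (Av <[w0]> - Av W)%R).
Proof.
move=> s2 t2 st_m m_gt1 S W w0W w0_longest.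
have D : dihedral_pair s t m by split.
by split; [exact: e_rel_exists D | exact: (e_rel_top D w0W w0_longest)].
Qed.
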